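(* Let $k\ge2$ and let $A=\{a_1,\dots,a_n\}$ be a sorted multiset of positive integers ($a_1\le\dots\le a_n$). Then $$\mathrm{OPT}(A)=\min_{k\le j\le n}\mathrm{OPT_L}(A[1,j]).$$
   Context: $[n]=\{1,\dots,n\}$; $\Sigma(S,A)=\sum_{i\in S}a_i$; for pairwise disjoint $S_1,\dots,S_k\subseteq[n]$, $\mathcal{R}(S_1,\dots,S_k,A)=\max_i\Sigma(S_i,A)/\min_i\Sigma(S_i,A)$ if the minimum is positive and $+\infty$ otherwise. $\mathrm{OPT}(A)$ is the minimum of $\mathcal{R}(S_1,\dots,S_k,A)$ over all $k$-tuples of pairwise disjoint subsets of $[n]$ (the $k$-SSR problem). $\mathrm{OPT_L}(A)$ is the minimum over such $k$-tuples additionally satisfying $n\in\bigcup_{i=1}^kS_i$ (the $k$-SSR$_L$ problem: the largest-index element must be used). $A[l,r]$ denotes the sorted multiset consisting of the items $a_i$ with $l\le i\le r$ (re-indexed in order). *)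

From mathcomp Require Import all_boot all_order all_algebra.
Set Implicit Arguments. Unset Strict Implicit. Unset Printing Implicit Defensive.
Import Order.TTheory GRing.Theory Num.Theory.

(* A sorted multiset A = {a_1 <= ... <= a_n} is a sequence a : seq nat;
   item a_i (1-based) is nth 0 a (i-1), i.e. index i-1 : 'I_n (0-based). *)

(* Extended nonnegative ratios: Some q is the rational q, None is +infinity. *)
Definition xle (x y : option rat) : bool :=
  match x, y with
  | _, None => true
  | None, Some _ => false
  | Some p, Some q => (p <= q)%R
  end.
Definition xmin (x y : option rat) : option rat := if xle x y then x else y.

Definition Sig (a : seq nat) (n : nat) (S : {set 'I_n}) : nat :=
  \sum_(i in S) nth 0 a i.

Definition pw_disjoint (k n : nat) (P : {ffun 'I_k -> {set 'I_n}}) : bool :=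
  [forall i : 'I_k, forall j : 'I_k, (i != j) ==> [disjoint P i & P j]].

Definition maxSig (a : seq nat) (k n : nat) (P : {ffun 'I_k -> {set 'I_n}}) : nat :=
  \max_(i < k) Sig a (P i).
(* minimum of the Sig (P i); the seed maxSig is >= every term, so for k >= 1
   this is exactly min_i Sig(P i). *)
Definition minSig (a : seq nat) (k n : nat) (P : {ffun 'I_k -> {set 'I_n}}) : nat :=
  \big[minn/maxSig a P]_(i < k) Sig a (P i).

Definition ratioR (a : seq nat) (k n : nat) (P : {ffun 'I_k -> {set 'I_n}})
  : option rat :=
  if (0 < minSig a P)%N
  then Some ((maxSig a P)%:R / (minSig a P)%:R)%R
  else None.

Definition OPT (k : nat) (a : seq nat) : option rat :=
  \big[xmin/None]_(P : {ffun 'I_k -> {set 'I_(size a)}} | pw_disjoint P)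
     ratioR a P.

Definition uses_last (k n : nat) (P : {ffun 'I_k -> {set 'I_n}}) : bool :=
  [exists i : 'I_k, [exists x in P i, val x == n.-1]].

Definition OPTL (k : nat) (a : seq nat) : option rat :=
  \big[xmin/None]_(P : {ffun 'I_k -> {set 'I_(size a)}}
                   | pw_disjoint P && uses_last P)
     ratioR a P.

(** Deleting unused items from A does not change any subset sum, so a solution
    for a prefix A[1,j] is a solution for A with the same ratio: OPT(A) is at most
    every OPT_L(A[1,j]).  Conversely, a solution of finite ratio consists of k
    nonempty pairwise disjoint sets; if a_j is the last item it uses, it is a
    k-SSR_L solution of A[1,j] with the same ratio, and j >= k because the k sets
    are disjoint and nonempty inside [j]. *)

From mathcomp Require Import all_boot all_order all_algebra.
Import Order.TTheory GRing.Theory Num.Theory.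

Set Implicit Arguments.
Unset Strict Implicit.
Unset Printing Implicit Defensive.

Lemma xle_refl x : xle x x.
Proof. by case: x => //= p; rewrite lexx. Qed.

Lemma xle_trans x y z : xle x y -> xle y z -> xle x z.
Proof. by case: x => [p|]; case: y => [q|]; case: z => [r|] //=; apply: le_trans. Qed.

Lemma xle_total x y : xle x y || xle y x.
Proof. by case: x => [p|]; case: y => [q|] //=; apply: le_total. Qed.

Lemma xle_anti x y : xle x y -> xle y x -> x = y.
Proof.
case: x => [p|]; case: y => [q|] //= pq qp.
by congr Some; apply/eqP; rewrite eq_le pq qp.
Qed.

Lemma xle_None x : xle x None.
Proof. by case: x. Qed.

Lemma xmin_l x y : xle (xmin x y) x.
Proof.
rewrite /xmin; case: ifP => [_|xy]; first exact: xle_refl.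
by have := xle_total x y; rewrite xy.
Qed.

Lemma xmin_r x y : xle (xmin x y) y.
Proof. by rewrite /xmin; case: ifP => // _; apply: xle_refl. Qed.

Lemma xmin_glb x y z : xle z x -> xle z y -> xle z (xmin x y).
Proof. by rewrite /xmin; case: ifP. Qed.

Section BigXmin.

Variables (I : eqType) (r : seq I) (P : pred I) (F : I -> option rat).

Lemma xbig_min_le i :
  i \in r -> P i -> xle (\big[xmin/None]_(j <- r | P j) F j) (F i).
Proof.
elim: r => //= x s IHs; rewrite in_cons big_cons => /orP[/eqP<- ->|i_s Pi].
  exact: xmin_l.
case: (P x); last exact: IHs.
exact: xle_trans (xmin_r _ _) (IHs i_s Pi).
Qed.

Lemma xbig_min_glb z :
  (forall i, i \in r -> P i -> xle z (F i)) ->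
  xle z (\big[xmin/None]_(j <- r | P j) F j).
Proof.
move=> zF; rewrite big_seq_cond; apply: (big_ind (xle z)).
- exact: xle_None.
- by move=> x y; apply: xmin_glb.
- by move=> i /andP[]; apply: zF.
Qed.

End BigXmin.

Lemma bigminn_le (I : eqType) (r : seq I) (P : pred I) (F : I -> nat) x0 i :
  i \in r -> P i -> \big[minn/x0]_(j <- r | P j) F j <= F i.
Proof.
elim: r => //= x s IHs; rewrite in_cons big_cons => /orP[/eqP<- ->|i_s Pi].
  exact: geq_minl.
case: (P x); last exact: IHs.
exact: leq_trans (geq_minr _ _) (IHs i_s Pi).
Qed.

Lemma minSig_gt0_neq0 (a : seq nat) k n (P : {ffun 'I_k -> {set 'I_n}}) i :
  0 < minSig a P -> P i != set0.
Proof.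
move=> /leq_trans/(_ (bigminn_le _ _ (mem_index_enum i) isT)).
by apply: contraTneq => ->; rewrite /Sig big_set0.
Qed.

Lemma minSig_gt0_k_gt0 (a : seq nat) k n (P : {ffun 'I_k -> {set 'I_n}}) :
  0 < minSig a P -> 0 < k.
Proof. by case: k P => // P; rewrite /minSig /maxSig !big_ord0. Qed.

Lemma pw_disjoint_leq k n (P : {ffun 'I_k -> {set 'I_n}}) :
  pw_disjoint P -> (forall i, P i != set0) -> k <= n.
Proof.
move=> /forallP disjP P_neq0.
have /fin_all_exists[f fP] : forall i, exists x, x \in P i by move=> i; apply/set0Pn.
have f_inj : injective f.
  move=> i j fij; apply/eqP/negPn/negP => ij.
  have := forallP (disjP i) j; rewrite ij /= => /disjointFr/(_ (fP i)).
  by rewrite fij fP.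
by have := leq_card f f_inj; rewrite !card_ord.
Qed.

Section Prefix.

Variables (k : nat) (a b : seq nat).
Hypothesis size_b : size b <= size a.

Definition widen_sets (P : {ffun 'I_k -> {set 'I_(size b)}}) :
  {ffun 'I_k -> {set 'I_(size a)}} := [ffun i => widen_ord size_b @: P i].

Definition shrink_sets (P : {ffun 'I_k -> {set 'I_(size a)}}) :
  {ffun 'I_k -> {set 'I_(size b)}} := [ffun i => widen_ord size_b @^-1: P i].

Lemma widen_ord_inj : injective (widen_ord size_b).
Proof. by move=> x y [xy]; apply: val_inj. Qed.

Lemma pw_disjoint_widen_sets (P : {ffun 'I_k -> {set 'I_(size b)}}) :
  pw_disjoint P -> pw_disjoint (widen_sets P).
Proof.
move=> /forallP disjP; apply/forallP => i; apply/forallP => j; apply/implyP => ij.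
have := forallP (disjP i) j; rewrite ij /= -!setI_eq0 !ffunE.
rewrite -imsetI; last by move=> x y _ _ /widen_ord_inj.
by move/eqP->; rewrite imset0.
Qed.

Lemma pw_disjoint_shrink_sets (P : {ffun 'I_k -> {set 'I_(size a)}}) :
  pw_disjoint P -> pw_disjoint (shrink_sets P).
Proof.
move=> /forallP disjP; apply/forallP => i; apply/forallP => j; apply/implyP => ij.
have := forallP (disjP i) j; rewrite ij /= -!setI_eq0 !ffunE -preimsetI.
by move/eqP->; rewrite preimset0.
Qed.

Lemma widen_shrink_sets (P : {ffun 'I_k -> {set 'I_(size a)}}) :
  (forall i x, x \in P i -> x < size b) -> widen_sets (shrink_sets P) = P.
Proof.
move=> P_lt; apply/ffunP => i; apply/setP => x; rewrite !ffunE.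
apply/imsetP/idP => [[y]|xP]; first by rewrite inE => yP ->.
have xE : widen_ord size_b (Ordinal (P_lt i x xP)) = x by apply: val_inj.
by exists (Ordinal (P_lt i x xP)); rewrite ?inE xE.
Qed.

Lemma uses_last_shrink_sets (P : {ffun 'I_k -> {set 'I_(size a)}}) i x :
  x \in P i -> (val x).+1 = size b -> uses_last (shrink_sets P).
Proof.
move=> xP x_last; have x_lt : x < size b by rewrite -x_last.
apply/existsP; exists i; apply/existsP; exists (Ordinal x_lt).
have xE : widen_ord size_b (Ordinal x_lt) = x by apply: val_inj.
by rewrite ffunE inE xE xP /=; apply/eqP; rewrite -x_last.
Qed.

Hypothesis nth_b : forall i, i < size b -> nth 0 b i = nth 0 a i.

Lemma Sig_widen_sets (P : {ffun 'I_k -> {set 'I_(size b)}}) i :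
  Sig a (widen_sets P i) = Sig b (P i).
Proof.
rewrite /Sig ffunE big_imset /=; last by move=> x y _ _ /widen_ord_inj.
by apply: eq_bigr => x _; rewrite nth_b.
Qed.

Lemma ratioR_widen_sets (P : {ffun 'I_k -> {set 'I_(size b)}}) :
  ratioR a (widen_sets P) = ratioR b P.
Proof.
have maxE : maxSig a (widen_sets P) = maxSig b P.
  by apply: eq_bigr => i _; rewrite Sig_widen_sets.
have minE : minSig a (widen_sets P) = minSig b P.
  by rewrite /minSig maxE; apply: eq_bigr => i _; rewrite Sig_widen_sets.
by rewrite /ratioR maxE minE.
Qed.

Lemma OPT_le_OPTL_prefix : xle (OPT k a) (OPTL k b).
Proof.
apply: xbig_min_glb => P _ /andP[P_disj _]; rewrite -ratioR_widen_sets.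
by apply: xbig_min_le; [apply: mem_index_enum | apply: pw_disjoint_widen_sets].
Qed.

Lemma OPTL_prefix_le_ratioR (P : {ffun 'I_k -> {set 'I_(size a)}}) i x :
  x \in P i -> (val x).+1 = size b ->
  pw_disjoint P -> (forall j y, y \in P j -> y < size b) ->
  xle (OPTL k b) (ratioR a P).
Proof.
move=> xP x_last P_disj P_lt.
rewrite -(widen_shrink_sets P_lt) ratioR_widen_sets.
apply: xbig_min_le; first exact: mem_index_enum.
by rewrite pw_disjoint_shrink_sets //; apply: uses_last_shrink_sets xP x_last.
Qed.

End Prefix.

Lemma size_take_leq j (a : seq nat) : size (take j a) <= size a.
Proof. by rewrite size_take_min geq_minr. Qed.

Lemma nth_take_prefix j (a : seq nat) i :
  i < size (take j a) -> nth 0 (take j a) i = nth 0 a i.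
Proof. by rewrite size_take_min ltn_min => /andP[ij _]; apply: nth_take. Qed.

Lemma exists_prefix_OPTL_le_ratioR k (a : seq nat)
    (P : {ffun 'I_k -> {set 'I_(size a)}}) :
  pw_disjoint P -> 0 < minSig a P ->
  exists2 j, k <= j <= size a & xle (OPTL k (take j a)) (ratioR a P).
Proof.
move=> P_disj minP.
have P_neq0 i := minSig_gt0_neq0 i minP.
pose used := \bigcup_(i < k) P i.
pose i0 := Ordinal (minSig_gt0_k_gt0 minP).
have [x0 x0P] := set0Pn _ (P_neq0 i0).
have x0_used : x0 \in used by apply/bigcupP; exists i0.
case: (arg_maxnP val x0_used) => xm /bigcupP[ixm _ xmP] xm_max.
pose b := take xm.+1 a.
have size_b : size b = xm.+1 by rewrite size_takel.
have P_lt i y : y \in P i -> y < size b.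
  by move=> yP; rewrite size_b ltnS; apply: xm_max; apply/bigcupP; exists i.
exists xm.+1; last first.
  exact: (OPTL_prefix_le_ratioR (size_take_leq _ a) (@nth_take_prefix _ a)
            xmP (esym size_b) P_disj P_lt).
rewrite ltn_ord andbT -size_b.
apply: (pw_disjoint_leq (pw_disjoint_shrink_sets (size_take_leq _ a) P_disj)) => i.
apply: contra_neq (P_neq0 i) => shrink0.
by rewrite -(widen_shrink_sets (size_take_leq _ a) P_lt) ffunE shrink0 imset0.
Qed.

Theorem lemma25 (k : nat) (a : seq nat) :
  (2 <= k)%N ->
  sorted leq a ->
  all (fun x => 0 < x)%N a ->
  OPT k a = \big[xmin/None]_(k <= j < (size a).+1) OPTL k (take j a).
Proof.
move=> _ _ _; apply: xle_anti.
  apply: xbig_min_glb => j _ _.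
  exact: OPT_le_OPTL_prefix (size_take_leq j a) (@nth_take_prefix j a).
apply: xbig_min_glb => P _ P_disj.
case minP: (0 < minSig a P); last by rewrite /ratioR minP xle_None.
have [j /andP[kj ja] j_le] := exists_prefix_OPTL_le_ratioR P_disj minP.
apply: xle_trans j_le; apply: xbig_min_le => //.
by rewrite mem_index_iota kj ltnS.
Qed.
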